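(* Let $\mathbb{D}$ be a virtual double category. Then $\mathbb{D}$ has decomposable multicells if and only if every multicell of $\mathbb{D}$ admits essentially unique decompositions of every shape given by a tree of height $2$ with the appropriate number of leaves.
   Context: A virtual double category (VDC) has objects, tight arrows forming a category, loose arrows $x\nrightarrow y$, and $n$-ary multicells ($n\ge0$) with a composable path of $n$ loose arrows as loose source, one loose arrow as loose target and two tight arrows as tight sides, together with identity unary multicells and an associative unital composition $\frac{\alpha_1\cdots\alpha_m}{\beta}$ pasting a compatible row of multicells onto an $m$-ary multicell (whiskering by a tight arrow when $m=0$). A tree is a rooted finite planar tree all of whose leaves are at the same distance from the root; its height is the number of layers of vertices (layer 1 contains the root). For an $m$-ary multicell $\alpha$ and a tree $T$ of height $h$ with $m$ leaves, a decomposition of $\alpha$ of shape $T$ assigns to each vertex with $k$ inputs a $k$-ary multicell, such that each layer forms a compatible row of multicells, the loose targets of layer $i+1$ are in order the loose sources of layer $i$ (interface $i$), and the iterated composite is $\alpha$. A morphism $P\to Q$ of such decompositions consists of compatible rows $\sigma_i$ ($1\le i\le h-1$) of unary multicells from interface $i$ of $P$ to interface $i$ of $Q$, with $\sigma_0,\sigma_h$ identities, such that for each layer $i$, layer $i$ of $P$ followed by $\sigma_{i-1}$ equals $\sigma_i$ followed by layer $i$ of $Q$. Two decompositions are equivalent if connected by a zigzag of morphisms. $\alpha$ admits essentially unique decompositions of shape $T$ if it has at least one and any two are equivalent. $\mathbb{D}$ has decomposable multicells if every multicell admits essentially unique decompositions of every shape of every height $\ge2$ (with the right number of leaves). *)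

From Stdlib Require Import Relations.
From mathcomp Require Import all_boot.

Set Implicit Arguments.
Unset Strict Implicit.
Unset Printing Implicit Defensive.

(* Virtual double categories, presented essentially-algebraically:        *)
(* one type of tight arrows, one of loose arrows, one of multicells, with *)
(* boundary functions; operations are total functions constrained by the  *)
(* axioms only on well-typed (composable) inputs.                         *)

Record vdc_data := VdcData {
  Ob : Type;
  Tt : Type;
  tdom : Tt -> Ob;
  tcod : Tt -> Ob;
  tid : Ob -> Tt;
  tcomp : Tt -> Tt -> Tt;         (* diagrammatic order: f then g *)
  Lo : Type;
  ldom : Lo -> Ob;
  lcod : Lo -> Ob;
  Cell : Type;
  csrc : Cell -> seq Lo;
  ctgt : Cell -> Lo;
  cleft : Cell -> Tt;
  cright : Cell -> Tt;
  cid : Lo -> Cell;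
  ccomp : Tt -> seq Cell -> Cell -> Cell
    (* ccomp g [a_1;..;a_m] b : paste the row (g; a_1..a_m) onto b;
       g is the leftmost tight arrow of the row (relevant when m = 0,
       where the composite is the whiskering of b by g) *)
}.

Section Ops.
Variable V : vdc_data.

Fixpoint path_ok (x : Ob V) (p : seq (Lo V)) (y : Ob V) : Prop :=
  match p with
  | [::] => x = y
  | l :: p' => ldom l = x /\ path_ok (lcod l) p' y
  end.

Fixpoint row_ok (g : Tt V) (As : seq (Cell V)) : Prop :=
  match As with
  | [::] => True
  | a :: As' => cleft a = g /\ row_ok (cright a) As'
  end.

Definition row_end (g : Tt V) (As : seq (Cell V)) : Tt V :=
  last g (map (@cright V) As).

Definition composable (g : Tt V) (As : seq (Cell V)) (b : Cell V) : Prop :=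
  [/\ row_ok g As, map (@ctgt V) As = csrc b,
      tcod g = tdom (cleft b) & tcod (row_end g As) = tdom (cright b)].

Fixpoint rowcomp (g : Tt V) (As : seq (Cell V)) (Bs : seq (Cell V))
  : seq (Cell V) :=
  match Bs with
  | [::] => [::]
  | b :: Bs' =>
      let k := size (csrc b) in
      ccomp g (take k As) b :: rowcomp (row_end g (take k As)) (drop k As) Bs'
  end.

End Ops.

Record is_vdc (V : vdc_data) : Prop := IsVdc {
  tid_dom : forall x : Ob V, tdom (tid x) = x;
  tid_cod : forall x : Ob V, tcod (tid x) = x;
  tcomp_dom : forall f g : Tt V, tcod f = tdom g -> tdom (tcomp f g) = tdom f;
  tcomp_cod : forall f g : Tt V, tcod f = tdom g -> tcod (tcomp f g) = tcod g;
  tcomp_idl : forall f : Tt V, tcomp (tid (tdom f)) f = f;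
  tcomp_idr : forall f : Tt V, tcomp f (tid (tcod f)) = f;
  tcompA : forall f g h : Tt V, tcod f = tdom g -> tcod g = tdom h ->
     tcomp (tcomp f g) h = tcomp f (tcomp g h);
  cell_wt : forall a : Cell V,
     [/\ path_ok (tdom (cleft a)) (csrc a) (tdom (cright a)),
         tcod (cleft a) = ldom (ctgt a) & tcod (cright a) = lcod (ctgt a)];
  cid_src : forall l : Lo V, csrc (cid l) = [:: l];
  cid_tgt : forall l : Lo V, ctgt (cid l) = l;
  cid_left : forall l : Lo V, cleft (cid l) = tid (ldom l);
  cid_right : forall l : Lo V, cright (cid l) = tid (lcod l);
  ccomp_src : forall (g : Tt V) (As : seq (Cell V)) (b : Cell V), composable g As b ->
     csrc (ccomp g As b) = flatten (map (@csrc V) As);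
  ccomp_tgt : forall (g : Tt V) (As : seq (Cell V)) (b : Cell V), composable g As b ->
     ctgt (ccomp g As b) = ctgt b;
  ccomp_left : forall (g : Tt V) (As : seq (Cell V)) (b : Cell V), composable g As b ->
     cleft (ccomp g As b) = tcomp g (cleft b);
  ccomp_right : forall (g : Tt V) (As : seq (Cell V)) (b : Cell V), composable g As b ->
     cright (ccomp g As b) = tcomp (row_end g As) (cright b);
  ccomp_unitl : forall a : Cell V,
     ccomp (cleft a) [:: a] (cid (ctgt a)) = a;
  ccomp_unitr : forall b : Cell V,
     ccomp (tid (tdom (cleft b))) (map (@cid V) (csrc b)) b = b;
  ccompA : forall (c : Cell V) (f : Tt V) (Bs : seq (Cell V)) (g : Tt V) (As : seq (Cell V)),
     composable f Bs c -> composable g As (ccomp f Bs c) ->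
     ccomp g As (ccomp f Bs c) = ccomp (tcomp g f) (rowcomp g As Bs) c
}.

(* Trees: a tree of height h is the list of its h layers of vertices,     *)
(* layer 1 first; a layer is the list of arities (numbers of inputs) of   *)
(* its vertices, left to right.  Leaves are the inputs of layer h.        *)

Fixpoint adjP {A : Type} (R : A -> A -> Prop) (s : seq A) : Prop :=
  match s with
  | x :: ((y :: _) as s') => R x y /\ adjP R s'
  | _ => True
  end.

Fixpoint allP {A : Type} (P : A -> Prop) (s : seq A) : Prop :=
  match s with
  | [::] => True
  | x :: s' => P x /\ allP P s'
  end.

Definition tree := seq (seq nat).

Definition is_tree (T : tree) : Prop :=
  [/\ (match T with [::] => False | l1 :: _ => size l1 = 1 end),
      allP (fun l => 0 < size l) T
    & adjP (fun l l' => sumn l = size l') T].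

Definition height (T : tree) : nat := size T.
Definition leaves (T : tree) : nat := sumn (last [::] T).

Section Decomp.
Variable V : vdc_data.

Definition arity (a : Cell V) : nat := size (csrc a).

Definition crow (L : seq (Cell V)) : Prop :=
  match L with [::] => True | a :: _ => row_ok (cleft a) L end.

Definition compL (L : seq (Cell V)) (b : Cell V) : Cell V :=
  match L with [::] => b | a :: _ => ccomp (cleft a) L b end.
Definition rowcompL (L : seq (Cell V)) (Bs : seq (Cell V)) : seq (Cell V) :=
  match L with [::] => [::] | a :: _ => rowcomp (cleft a) L Bs end.

Definition is_decomp (alpha : Cell V) (T : tree) (D : seq (seq (Cell V))) : Prop :=
  [/\ map (map arity) D = T,
      allP crow D,
      adjP (fun Li Li1 => map (@ctgt V) Li1 = flatten (map (@csrc V) Li)) D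
    & (match D with
       | [:: root] :: rest => foldl (fun b L => compL L b) root rest = alpha
       | _ => False
       end)].

(* a morphism P -> Q of decompositions of alpha: sigma lists the rows
   sigma_1, ..., sigma_{h-1} (each with its leftmost tight arrow). *)
Definition is_decomp_mor (alpha : Cell V) (P Q : seq (seq (Cell V)))
    (sigma : seq (Tt V * seq (Cell V))) : Prop :=
  let h := size P in
  let sig0 := (tid (ldom (ctgt alpha)), [:: cid (ctgt alpha)]) in
  let sigh := (tid (tdom (cleft alpha)), map (@cid V) (csrc alpha)) in
  [/\ size sigma = h.-1,
      allP (fun x : (seq (Cell V) * seq (Cell V)) * (Tt V * seq (Cell V)) =>
              let: ((Pi, Qi), (g, s)) := x in
              [/\ row_ok g s, allP (fun c => arity c = 1) s,
                  flatten (map (@csrc V) s) = flatten (map (@csrc V) Pi)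
                & map (@ctgt V) s = flatten (map (@csrc V) Qi)])
           (zip (zip (take h.-1 P) (take h.-1 Q)) sigma)
    & allP (fun x : (seq (Cell V) * seq (Cell V)) *
                    ((Tt V * seq (Cell V)) * (Tt V * seq (Cell V))) =>
              let: ((Pi, Qi), (slo, shi)) := x in
              rowcompL Pi slo.2 = rowcomp shi.1 shi.2 Qi)
           (zip (zip P Q) (zip (sig0 :: sigma) (rcons sigma sigh)))].

Definition decomp_arrow (alpha : Cell V) (T : tree) (P Q : seq (seq (Cell V))) : Prop :=
  [/\ is_decomp alpha T P, is_decomp alpha T Q
    & exists sigma, is_decomp_mor alpha P Q sigma].

Definition decomp_equiv (alpha : Cell V) (T : tree) :=
  clos_refl_sym_trans _ (decomp_arrow alpha T).

Definition ess_unique_decomp (alpha : Cell V) (T : tree) : Prop :=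
  (exists P, is_decomp alpha T P) /\
  (forall P Q, is_decomp alpha T P -> is_decomp alpha T Q -> decomp_equiv alpha T P Q).

Definition has_decomposable_multicells : Prop :=
  forall (alpha : Cell V) (T : tree),
    is_tree T -> 2 <= height T -> leaves T = arity alpha ->
    ess_unique_decomp alpha T.

End Decomp.

(* Induction on the height.  If the top two layers of T are [k] and L2, merging them
   into one vertex of arity sumn L2 gives a tree T' one layer shorter; let T2 be the
   height-2 tree [[k]; L2].  Pasting the second layer of a decomposition of shape T onto
   its root gives one of shape T', and conversely the root of a decomposition of shape T'
   splits along T2 by the height-2 hypothesis; this gives existence.  For uniqueness, a
   zigzag between the two merged decompositions lifts to shape T: decompositions with the
   same merged root are connected because their top two layers are decompositions of
   shape T2 of that root, and a morphism of merged decompositions is lifted by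
   associativity, pasting its first row onto the second layer of its target. *)

From Pilot Require Import Defs.
From Stdlib Require Import Relations Setoid.
From mathcomp Require Import all_boot.

Set Implicit Arguments.
Unset Strict Implicit.
Unset Printing Implicit Defensive.

Section ClosReflSymTrans.
Variables (A B : Type) (R : relation A) (S : relation B).

Lemma clos_rst_map (f : A -> B) :
  (forall x y, R x y -> S (f x) (f y)) ->
  forall x y, clos_refl_sym_trans A R x y -> clos_refl_sym_trans B S (f x) (f y).
Proof.
move=> RS x y; elim=> {x y} [x y /RS|x|x y _|x y z _ Sxy _ Syz].
- exact: rst_step.
- exact: rst_refl.
- exact: rst_sym.
- exact: rst_trans Sxy Syz.
Qed.

Lemma clos_rst_lift (over : B -> A -> Prop) :
  (forall x y, R x y -> (exists b, over b x) /\ (exists b, over b y)) ->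
  (forall x y b b', R x y -> over b x -> over b' y -> clos_refl_sym_trans B S b b') ->
  (forall x b b', over b x -> over b' x -> clos_refl_sym_trans B S b b') ->
  forall x y, clos_refl_sym_trans A R x y ->
  forall b b', over b x -> over b' y -> clos_refl_sym_trans B S b b'.
Proof.
move=> R_lifts R_S fibre_S x y xy.
suff [] : ((exists b, over b x) <-> (exists b, over b y)) /\
          (forall b b', over b x -> over b' y -> clos_refl_sym_trans B S b b') by [].
elim: xy => {x y} [x y xy|x|x y _ [IH1 IH2]|x y z _ [IH1 IH2] _ [IH1' IH2']].
- have [[b xb] [b' yb']] := R_lifts x y xy.
  split; first by split=> _; [exists b' | exists b].
  by move=> b1 b1'; apply: R_S xy.
- by split=> //; apply: fibre_S.
- by split=> [|b b' ? ?]; [apply: iff_sym | apply: rst_sym; apply: IH2].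
- split; first exact: iff_trans IH1 IH1'.
  move=> b b'' xb zb''; have [b' yb'] := IH1.1 (ex_intro _ b xb).
  exact: rst_trans (IH2 _ _ xb yb') (IH2' _ _ yb' zb'').
Qed.

End ClosReflSymTrans.

Lemma allP_cat (T : Type) (P : T -> Prop) (s1 s2 : seq T) :
  Defs.allP P (s1 ++ s2) -> Defs.allP P s1 /\ Defs.allP P s2.
Proof. by elim: s1 => [|x s1 IH] //= [Px /IH[]]. Qed.

Section VirtualDoubleCategory.
Variable V : vdc_data.
Hypothesis HV : is_vdc V.
Implicit Types (alpha r a b c x y : Cell V) (s As Bs L : seq (Cell V)) (g h : Tt V).

Definition unary_row s := Defs.allP (fun c => arity c = 1) s.

Lemma path_ok_last u p w : path_ok u p w -> w = last u (map (@lcod V) p).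
Proof. by elim: p u => [|l p IH] u /=; [| case=> _ /IH]. Qed.

Lemma tcod_row_end g As : row_ok g As ->
  tcod (row_end g As) = last (tcod g) (map (fun a => lcod (ctgt a)) As).
Proof.
elim: As g => [|a As IH] g //= [_ rAs].
by rewrite -/(row_end (cright a) As) IH //; case: (cell_wt HV a) => _ _ ->.
Qed.

Lemma composable_row g As b : row_ok g As -> map (@ctgt V) As = csrc b ->
  tcod g = tdom (cleft b) -> composable g As b.
Proof.
move=> rAs tAs gb; split=> //; rewrite tcod_row_end // gb.
have -> : map (fun a => lcod (ctgt a)) As = map (@lcod V) (csrc b) by rewrite -tAs -map_comp.
by case: (cell_wt HV b) => /path_ok_last.
Qed.

Lemma composable_cons g a As b : row_ok g (a :: As) ->
  map (@ctgt V) (a :: As) = csrc b -> composable g (a :: As) b.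
Proof.
move=> rAs tAs; apply: composable_row => //.
case: rAs => <- _; case: (cell_wt HV a) => _ -> _.
by case: (cell_wt HV b); rewrite -tAs => -[].
Qed.

Lemma row_ok_cid u p w : path_ok u p w -> row_ok (tid u) (map (@cid V) p).
Proof.
elim: p u => [|l p IH] u //= [<- pp].
by rewrite (cid_left HV) (cid_right HV); split=> //; apply: IH pp.
Qed.

Lemma row_end_cid u p w : path_ok u p w -> row_end (tid u) (map (@cid V) p) = tid w.
Proof.
elim: p u => [|l p IH] u /=; first by move=> ->.
by case=> _ pp; rewrite /row_end /= -/(row_end _ _) (cid_right HV); apply: IH pp.
Qed.

Lemma flatten_csrc_cid p : flatten (map (@csrc V) (map (@cid V) p)) = p.
Proof. by elim: p => [|l p IH] //=; rewrite (cid_src HV) IH. Qed.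

Lemma map_ctgt_cid p : map (@ctgt V) (map (@cid V) p) = p.
Proof. by elim: p => [|l p IH] //=; rewrite (cid_tgt HV) IH. Qed.

Lemma unary_row_cid p : unary_row (map (@cid V) p).
Proof. by elim: p => [|l p IH] //; split; rewrite // /arity (cid_src HV). Qed.

Lemma rowcomp_unitr g Bs : row_ok g Bs ->
  rowcomp (tid (tdom g)) (map (@cid V) (flatten (map (@csrc V) Bs))) Bs = Bs.
Proof.
elim: Bs g => [|b Bs IH] g //= [<- rBs].
rewrite map_cat take_size_cat ?size_map // drop_size_cat ?size_map //.
rewrite (ccomp_unitr HV); congr (_ :: _).
by case: (cell_wt HV b) => /row_end_cid -> _ _; apply: IH.
Qed.

Lemma rowcomp_unitl g As : row_ok g As ->
  rowcomp g As (map (@cid V) (map (@ctgt V) As)) = As.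
Proof.
elim: As g => [|a As IH] g //= [ga rAs].
by rewrite (cid_src HV) /= take0 drop0 -ga (ccomp_unitl HV) IH.
Qed.

Lemma row_ok_cat g As Bs :
  row_ok g (As ++ Bs) -> row_ok g As /\ row_ok (row_end g As) Bs.
Proof. by elim: As g => [|a As IH] g //= [-> /IH[]]. Qed.

Lemma size_flatten_unary s : unary_row s -> size (flatten (map (@csrc V) s)) = size s.
Proof. by elim: s => [|a s IH] //= [a1 /IH s1]; rewrite size_cat s1 -/(arity a) a1. Qed.

Lemma rowcomp_unary g s h Bs : row_ok g s -> unary_row s ->
  map (@ctgt V) s = flatten (map (@csrc V) Bs) -> row_ok h Bs -> tcod g = tdom h ->
  [/\ map (@arity V) (rowcomp g s Bs) = map (@arity V) Bs,
      flatten (map (@csrc V) (rowcomp g s Bs)) = flatten (map (@csrc V) s),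
      map (@ctgt V) (rowcomp g s Bs) = map (@ctgt V) Bs
    & row_ok (tcomp g h) (rowcomp g s Bs)].
Proof.
elim: Bs g s h => [|b Bs IH] g s h rs us ts /=; first by case: s ts {rs us}.
case=> <- rBs gb; set k := size (csrc b).
have s_split := cat_take_drop k s.
have ts1 : map (@ctgt V) (take k s) = csrc b by rewrite map_take ts take_size_cat.
have ts2 : map (@ctgt V) (drop k s) = flatten (map (@csrc V) Bs).
  by rewrite map_drop ts drop_size_cat.
have [rs1 rs2] : row_ok g (take k s) /\ row_ok (row_end g (take k s)) (drop k s).
  by apply: row_ok_cat; rewrite s_split.
have [us1 us2] : unary_row (take k s) /\ unary_row (drop k s).
  by apply: allP_cat; rewrite s_split.
have cb := composable_row rs1 ts1 gb; have [_ _ _ end_b] := cb.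
have [IH1 IH2 IH3 IH4] := IH _ _ _ rs2 us2 ts2 rBs end_b.
split=> /=.
- by rewrite IH1 /arity (ccomp_src HV cb) size_flatten_unary // -(size_map (@ctgt V)) ts1.
- by rewrite IH2 (ccomp_src HV cb) -flatten_cat -map_cat s_split.
- by rewrite IH3 (ccomp_tgt HV cb).
- by rewrite (ccomp_left HV cb) (ccomp_right HV cb).
Qed.

Definition layer_on L c : Prop := [/\ 0 < size L, crow L & map (@ctgt V) L = csrc c].

Fixpoint stack_on c (R : seq (seq (Cell V))) : Prop :=
  match R with
  | [::] => True
  | L :: R' => layer_on L c /\ stack_on (compL L c) R'
  end.

Definition paste_layers c (R : seq (seq (Cell V))) : Cell V :=
  foldl (fun b L => compL L b) c R.

Definition fits_above (L L' : seq (Cell V)) : Prop :=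
  map (@ctgt V) L' = flatten (map (@csrc V) L).

Lemma csrc_compL L c : layer_on L c -> csrc (compL L c) = flatten (map (@csrc V) L).
Proof.
by case: L => [|a L] [//= _ rL tL]; rewrite (ccomp_src HV (composable_cons rL tL)).
Qed.

Lemma ctgt_compL L c : layer_on L c -> ctgt (compL L c) = ctgt c.
Proof.
by case: L => [|a L] [//= _ rL tL]; rewrite (ccomp_tgt HV (composable_cons rL tL)).
Qed.

Lemma arity_compL L c : layer_on L c -> arity (compL L c) = sumn (map (@arity V) L).
Proof. by rewrite /arity => /csrc_compL ->; rewrite size_flatten /shape -map_comp. Qed.

Lemma ctgt_paste_layers c R : stack_on c R -> ctgt (paste_layers c R) = ctgt c.
Proof. by elim: R c => [|L R IH] c //= [cL /IH ->]; apply: ctgt_compL. Qed.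

Lemma arity_gt0_stack c L R : stack_on c (L :: R) -> 0 < arity c.
Proof. by case=> -[L_gt0 _ tL] _; rewrite /arity -tL size_map. Qed.

Lemma stack_onE c Lc R : csrc c = flatten (map (@csrc V) Lc) ->
  stack_on c R <->
  [/\ adjP fits_above (Lc :: R), Defs.allP (@crow V) R & Defs.allP (fun L => 0 < size L) R].
Proof.
elim: R c Lc => [|L R IH] c Lc //= sc; split.
- case=> cL /(IH _ L (csrc_compL cL)) [adjR crR szR].
  by have [? ? tL] := cL; do !split=> //; rewrite /fits_above tL.
- case=> -[tL adjR] [crL crR] [szL szR].
  have cL : layer_on L c by split=> //; rewrite tL.
  by split=> //; apply/(IH _ L (csrc_compL cL)).
Qed.

Lemma is_decomp_root alpha T D : is_decomp alpha T D -> exists r R, D = [:: r] :: R.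
Proof. by case: D => [|[|r [|? ?]] R] [] //; exists r, R. Qed.

Lemma is_decomp_consE alpha (T : tree) r R :
  Defs.allP (fun l => 0 < size l) T ->
  is_decomp alpha T ([:: r] :: R) <->
  [/\ map (map (@arity V)) ([:: r] :: R) = T, stack_on r R & paste_layers r R = alpha].
Proof.
have src_r : csrc r = flatten (map (@csrc V) [:: r]) by rewrite /= cats0.
move=> szT; split.
- case=> shape_D [_ crR] adjD rR; split=> //; apply/(stack_onE R src_r); split=> //.
  move: szT; rewrite -shape_D => -[_].
  elim: (R) => [|L R' IH] //= [szL /IH szR].
  by rewrite size_map in szL.
- by case=> shape_D /(stack_onE R src_r) [adjD crR _] rR; split.
Qed.

Definition idrow_tgt c : Tt V * seq (Cell V) := (tid (ldom (ctgt c)), [:: cid (ctgt c)]).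
Definition idrow_src c : Tt V * seq (Cell V) := (tid (tdom (cleft c)), map (@cid V) (csrc c)).

Definition mor_row P Q (gs : Tt V * seq (Cell V)) : Prop :=
  let: (g, s) := gs in
  [/\ row_ok g s, unary_row s, flatten (map (@csrc V) s) = flatten (map (@csrc V) P)
    & map (@ctgt V) s = flatten (map (@csrc V) Q)].

Definition mor_square P Q (lo hi : Tt V * seq (Cell V)) : Prop :=
  rowcompL P lo.2 = rowcomp hi.1 hi.2 Q.

(* [lo] and [hi] play the roles of the rows sigma_0 and sigma_h, and [sigma] lists
   sigma_1, ..., sigma_{h-1}. *)
Fixpoint mor_stack (lo hi : Tt V * seq (Cell V)) (P Q : seq (seq (Cell V)))
    (sigma : seq (Tt V * seq (Cell V))) : Prop :=
  match sigma, P, Q with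
  | [::], [:: P1], [:: Q1] => mor_square P1 Q1 lo hi
  | gs :: sigma', P1 :: P', Q1 :: Q' =>
      [/\ mor_row P1 Q1 gs, mor_square P1 Q1 lo gs & mor_stack gs hi P' Q' sigma']
  | _, _, _ => False
  end.

Lemma mor_stackE lo hi P Q sigma :
  size P = (size sigma).+1 -> size Q = (size sigma).+1 ->
  mor_stack lo hi P Q sigma <->
  Defs.allP (fun x : (seq (Cell V) * seq (Cell V)) * (Tt V * seq (Cell V)) =>
               let: ((Pi, Qi), gs) := x in mor_row Pi Qi gs)
            (zip (zip (take (size sigma) P) (take (size sigma) Q)) sigma) /\
  Defs.allP (fun x : (seq (Cell V) * seq (Cell V)) *
                     ((Tt V * seq (Cell V)) * (Tt V * seq (Cell V))) =>
               let: ((Pi, Qi), (lo', hi')) := x in mor_square Pi Qi lo' hi')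
            (zip (zip P Q) (zip (lo :: sigma) (rcons sigma hi))).
Proof.
elim: sigma lo P Q => [|gs sigma IH] lo [|P1 P] [|Q1 Q] //= [szP] [szQ].
  by case: P Q szP szQ => [|? ?] [|? ?] //; split=> [|[_ []]].
have [IH1 IH2] := IH gs P Q szP szQ.
split; first by case=> rowP sqP /IH1[]; do !split.
by case=> -[rowP rows] [sqP sqs]; split=> //; apply: IH2.
Qed.

Lemma is_decomp_morE alpha P Q sigma :
  size P = (size sigma).+1 -> size Q = size P ->
  is_decomp_mor alpha P Q sigma <-> mor_stack (idrow_tgt alpha) (idrow_src alpha) P Q sigma.
Proof.
move=> szP szQ; rewrite szP in szQ.
have [toE ofE] := mor_stackE (idrow_tgt alpha) (idrow_src alpha) szP szQ.
rewrite /is_decomp_mor szP /=.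
by split=> [[_ rows sqs] | /toE[rows sqs]]; [apply: ofE | split].
Qed.

Lemma mor_stack_size lo hi P Q sigma :
  mor_stack lo hi P Q sigma -> size P = (size sigma).+1 /\ size Q = size P.
Proof.
elim: sigma lo P Q => [|gs sigma IH] lo P Q.
  by case: P Q => [|P1 [|? ?]] [|Q1 [|? ?]].
by case: P Q => [|P1 P] [|Q1 Q] //= [_ _ /IH[-> ->]].
Qed.

Lemma mor_row_idrow P Q c : flatten (map (@csrc V) P) = csrc c ->
  flatten (map (@csrc V) Q) = csrc c -> mor_row P Q (idrow_src c).
Proof.
move=> sP sQ; split; rewrite ?flatten_csrc_cid ?map_ctgt_cid ?sP ?sQ //.
  by case: (cell_wt HV c) => /row_ok_cid.
exact: unary_row_cid.
Qed.

Lemma mor_square_idrow L c :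
  layer_on L c -> mor_square L L (idrow_src c) (idrow_src (compL L c)).
Proof.
case: L => [|a L] // cL; have [_ rL tL] := cL.
have cb := composable_cons rL tL; have [_ _ gc _] := cb.
have -> : idrow_src (compL (a :: L) c) =
          (tid (tdom (cleft a)), map (@cid V) (flatten (map (@csrc V) (a :: L)))).
  by rewrite /idrow_src (csrc_compL cL) /= (ccomp_left HV cb) (tcomp_dom HV gc).
by rewrite /mor_square rowcomp_unitr //= -tL rowcomp_unitl.
Qed.

Lemma rowcompL_cid L c : layer_on L c -> rowcompL L (map (@cid V) (csrc c)) = L.
Proof. by case: L => [|a L] [//= _ rL <-]; apply: rowcomp_unitl. Qed.

Fixpoint idrows c (R : seq (seq (Cell V))) : seq (Tt V * seq (Cell V)) :=
  if R is L :: R' then idrow_src c :: idrows (compL L c) R' else [::].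

Lemma size_idrows c R : size (idrows c R) = size R.
Proof. by elim: R c => [|L R IH] c //=; rewrite IH. Qed.

Lemma mor_stack_idrows c L R : stack_on c (L :: R) ->
  mor_stack (idrow_src c) (idrow_src (paste_layers c (L :: R))) (L :: R) (L :: R)
            (idrows (compL L c) R).
Proof.
elim: R c L => [|L' R IH] c L /= [cL cR]; first exact: mor_square_idrow.
split; last exact: IH cR.
  by apply: mor_row_idrow; rewrite csrc_compL.
exact: mor_square_idrow.
Qed.

Lemma rowcompL_idrow_tgt x c : ctgt x = ctgt c -> rowcompL [:: x] (idrow_tgt c).2 = [:: x].
Proof. by move=> tx; rewrite /= (cid_src HV) /= -tx (ccomp_unitl HV). Qed.

Lemma mor_square_idrow_root a c : ctgt a = ctgt c ->
  mor_square [:: a] [:: a] (idrow_tgt c) (idrow_src a).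
Proof.
move=> ta; rewrite /mor_square rowcompL_idrow_tgt //.
by have := @rowcomp_unitr (cleft a) [:: a]; rewrite /= cats0 => ->.
Qed.

Lemma mor_square_root x y c g s : ctgt x = ctgt c -> map (@ctgt V) s = csrc y ->
  mor_square [:: x] [:: y] (idrow_tgt c) (g, s) -> x = ccomp g s y.
Proof.
move=> tx ts; rewrite /mor_square rowcompL_idrow_tgt //= -ts size_map take_size.
by case.
Qed.

Lemma ccomp_compL g s B a : layer_on B a -> composable g s (compL B a) -> unary_row s ->
  [/\ ccomp g s (compL B a) = compL (rowcomp g s B) a, layer_on (rowcomp g s B) a,
      map (@arity V) (rowcomp g s B) = map (@arity V) B
    & flatten (map (@csrc V) (rowcomp g s B)) = flatten (map (@csrc V) s)].
Proof.
case: B => [|b B] aB cs us; first by case: aB.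
have [_ rB tB] := aB.
have cB := composable_cons rB tB; have [_ _ gb _] := cB.
have [rs ts gs _] := cs; rewrite (csrc_compL aB) in ts.
rewrite /= (ccomp_left HV cB) (tcomp_dom HV gb) in gs.
have [Ra Rf Rt rB'] := rowcomp_unary rs us ts rB gs.
rewrite [ccomp _ _ _](ccompA HV cB cs).
move: (rowcomp g s (b :: B)) Ra Rf Rt rB' => [|b' B'] // Ra Rf Rt rB'.
have [gb' _] := rB'; rewrite /= gb'.
by split=> //; split=> //; [rewrite /crow gb' | rewrite Rt].
Qed.

Lemma decomp_mor_root alpha (T : tree) x y R R' sigma :
  Defs.allP (fun l => 0 < size l) T -> 0 < size R ->
  is_decomp alpha T ([:: x] :: R) -> is_decomp alpha T ([:: y] :: R') ->
  is_decomp_mor alpha ([:: x] :: R) ([:: y] :: R') sigma ->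
  exists g s sigma', [/\ sigma = (g, s) :: sigma', x = ccomp g s y, composable g s y,
    mor_row [:: x] [:: y] (g, s) & mor_stack (g, s) (idrow_src alpha) R R' sigma'].
Proof.
move=> szT R_gt0 /(is_decomp_consE _ _ _ szT) [shP sR pR].
move=> /(is_decomp_consE _ _ _ szT) [shQ sR' pR'].
have szR' : size R' = size R.
  by move: (congr1 size (etrans shQ (esym shP))); rewrite !size_map => -[].
move=> mor; have [sz_sigma _ _] := mor.
move/is_decomp_morE: mor; rewrite /= sz_sigma szR' => /(_ erefl erefl).
case: sigma sz_sigma => [|[g s] sigma'] /= sz_sigma; first by rewrite -sz_sigma in R_gt0.
case=> rowP sq ms; have [rs _ _ ts] := rowP; rewrite /= cats0 in ts.
have tx : ctgt x = ctgt alpha by rewrite -pR ctgt_paste_layers.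
exists g, s, sigma'; split=> //; first exact: mor_square_root sq.
have : 0 < arity y.
  case: R' szR' sR' {shQ pR' ms} => [|L' R'] /= szR; first by rewrite -szR in R_gt0.
  exact: arity_gt0_stack.
by rewrite /arity -ts; case: s rs ts {rowP sq ms} => // a s rs ts _; apply: composable_cons.
Qed.

End VirtualDoubleCategory.

Lemma is_tree_top2 k L2 (RT : tree) :
  is_tree ([:: [:: k], L2 & RT]) -> is_tree [:: [:: k]; L2].
Proof. by case=> _ /= [_ [? _]] [? _]. Qed.

Lemma is_tree_merge_top2 k L2 (RT : tree) :
  is_tree ([:: [:: k], L2 & RT]) -> is_tree ([:: sumn L2] :: RT).
Proof.
case=> _ /= [_ [_ szRT]] [_ adj]; split=> //.
by case: RT adj {szRT} => [|L3 RT] //= [sz3 adj]; rewrite addn0.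
Qed.

Lemma leaves_merge_top2 k L2 (RT : tree) :
  leaves ([:: sumn L2] :: RT) = leaves ([:: [:: k], L2 & RT]).
Proof. by case: RT => //; rewrite /leaves /= addn0. Qed.

Section MergeTopLayers.
Variables (V : vdc_data) (k : nat) (L2 : seq nat) (RT : tree).
Hypothesis HV : is_vdc V.
Hypothesis tree_T : is_tree ([:: [:: k], L2 & RT]).
Hypothesis RT_gt0 : 0 < size RT.
Implicit Types (alpha r a : Cell V) (B : seq (Cell V)) (P Q X Y R : seq (seq (Cell V))).

Let T : tree := [:: [:: k], L2 & RT].
Let T' : tree := [:: sumn L2] :: RT.
Let T2 : tree := [:: [:: k]; L2].

Let layers_T : Defs.allP (fun l => 0 < size l) T.
Proof. by case: tree_T. Qed.

Let layers_T' : Defs.allP (fun l => 0 < size l) T'.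
Proof. by case: (is_tree_merge_top2 tree_T). Qed.

Let layers_T2 : Defs.allP (fun l => 0 < size l) T2.
Proof. by case: (is_tree_top2 tree_T). Qed.

Definition merge_top2 P : seq (seq (Cell V)) :=
  if P is [:: a] :: B :: R then [:: compL B a] :: R else P.

Lemma is_decomp_split alpha a B R :
  is_decomp alpha T ([:: a] :: B :: R) <->
  is_decomp (compL B a) T2 [:: [:: a]; B] /\ is_decomp alpha T' ([:: compL B a] :: R).
Proof.
rewrite (is_decomp_consE HV _ _ _ layers_T) (is_decomp_consE HV _ _ _ layers_T2).
rewrite (is_decomp_consE HV _ _ _ layers_T') /T /T' /T2 /=.
split=> [[[<- <- <-] [aB sR] pR] | [[[<- <-] [aB _] _] [[_ <-] sR pR]]]; last by split.
by rewrite (arity_compL HV aB).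
Qed.

Lemma is_decomp_shape alpha P : is_decomp alpha T P -> exists a B R, P = [:: a] :: B :: R.
Proof.
move=> dP; have [r [[|B R] EP]] := is_decomp_root dP; last by exists r, B, R.
by case: dP; rewrite EP.
Qed.

Lemma is_decomp_merge_top2 alpha P :
  is_decomp alpha T P -> is_decomp alpha T' (merge_top2 P).
Proof.
move=> dP; have [a [B [R EP]]] := is_decomp_shape dP.
by move: dP; rewrite EP => /is_decomp_split[].
Qed.

Lemma decomp_arrow_T2_lift alpha r R X Y : is_decomp alpha T' ([:: r] :: R) ->
  decomp_arrow r T2 X Y -> decomp_arrow alpha T (X ++ R) (Y ++ R).
Proof.
move=> dR [dX dY [sigma mor]].
have [a [[|B [|? ?]] EX]] := is_decomp_root dX; subst X; try by case: dX.
have [a' [[|B' [|? ?]] EY]] := is_decomp_root dY; subst Y; try by case: dY.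
have [_ [aB _] /= rB] := (is_decomp_consE HV _ _ _ layers_T2).1 dX.
have [_ [aB' _] /= rB'] := (is_decomp_consE HV _ _ _ layers_T2).1 dY.
have dQ : is_decomp alpha T ([:: a'] :: B' :: R) by apply/is_decomp_split; rewrite rB'.
subst r; have dP : is_decomp alpha T ([:: a] :: B :: R) by apply/is_decomp_split.
split=> //; have [sz_sigma _ _] := mor.
case: sigma sz_sigma mor => [|gs [|? ?]] // _.
move/is_decomp_morE => /(_ erefl erefl) /= [row_a sq_a sq_B].
have [[_ shR] sR pR] := (is_decomp_consE HV _ _ _ layers_T').1 dR.
exists (gs :: idrows (compL B a) R); apply/is_decomp_morE => //=.
  by rewrite size_idrows.
have -> : idrow_tgt alpha = idrow_tgt (compL B a).
  by rewrite /idrow_tgt -pR ctgt_paste_layers.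
case: R shR sR pR {dR dP dQ} => [|L R] shR sR pR; first by move: RT_gt0; rewrite -shR.
split=> //; split=> //; last by rewrite -pR; apply: (mor_stack_idrows HV).
apply: (mor_row_idrow HV); first by rewrite (csrc_compL HV aB).
by rewrite -rB' (csrc_compL HV aB').
Qed.

Lemma is_decomp_T'_arity alpha r R : is_decomp alpha T' ([:: r] :: R) -> arity r = sumn L2.
Proof. by case/(is_decomp_consE HV _ _ _ layers_T') => -[]. Qed.

Section UniqueTop2.
Hypothesis unique_T2 : forall r, arity r = sumn L2 -> ess_unique_decomp r T2.

Lemma merge_top2_lift alpha X :
  is_decomp alpha T' X -> exists P, is_decomp alpha T P /\ merge_top2 P = X.
Proof.
move=> dX; have [r [R EX]] := is_decomp_root dX; subst X.
have [[Y dY] _] := unique_T2 (is_decomp_T'_arity dX).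
have [a [[|B [|? ?]] EY]] := is_decomp_root dY; subst Y; try by case: dY.
have [_ _ /= rB] := (is_decomp_consE HV _ _ _ layers_T2).1 dY.
exists ([:: a] :: B :: R); split; last by rewrite /= rB.
by apply/is_decomp_split; rewrite rB.
Qed.

Lemma decomp_equiv_merge_top2 alpha P Q : is_decomp alpha T P -> is_decomp alpha T Q ->
  merge_top2 P = merge_top2 Q -> decomp_equiv alpha T P Q.
Proof.
move=> dP dQ; have [a [B [R EP]]] := is_decomp_shape dP.
have [a' [B' [R' EQ]]] := is_decomp_shape dQ; subst P Q => -[eB <-].
move: dP dQ => /is_decomp_split [dX dR] /is_decomp_split [dY _].
rewrite -eB in dY; have [_ uniq] := unique_T2 (is_decomp_T'_arity dR).
apply: (clos_rst_map (f := fun X => X ++ R)) (uniq _ _ dX dY) => X Y.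
exact: decomp_arrow_T2_lift dR.
Qed.

Lemma decomp_arrow_T'_lift alpha P Q : is_decomp alpha T P -> is_decomp alpha T Q ->
  decomp_arrow alpha T' (merge_top2 P) (merge_top2 Q) -> decomp_equiv alpha T P Q.
Proof.
move=> dP dQ; have [a [B [R EP]]] := is_decomp_shape dP.
have [a' [B' [R' EQ]]] := is_decomp_shape dQ; subst P Q => -[dX dY [sigma mor]] /=.
have [[_ shR] _ _] := (is_decomp_consE HV _ _ _ layers_T').1 dX.
have R_gt0 : 0 < size R by rewrite -(size_map (map (@arity V))) shR.
have [g [s [sigma' [_ ex cs [_ us _ _] ms]]]] := decomp_mor_root HV layers_T' R_gt0 dX dY mor.
move: (dQ) => /is_decomp_split [dY2 _].
have [[ka' shB'] [aB' _] _] := (is_decomp_consE HV _ _ _ layers_T2).1 dY2.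
have [eB2 aB2 arB2 sB2] := ccomp_compL HV aB' cs us.
(* By associativity, [compL B a] is also [a'] under the layer [s] pasted onto [B']. *)
set B2 := rowcomp g s B' in eB2 aB2 arB2 sB2.
have dP2 : is_decomp alpha T ([:: a'] :: B2 :: R).
  apply/is_decomp_split; split; last by rewrite -eB2 -ex.
  by apply/(is_decomp_consE HV _ _ _ layers_T2); split=> //=; rewrite ka' arB2 shB'.
apply: rst_trans (decomp_equiv_merge_top2 dP dP2 _) _; first by rewrite /= -eB2 -ex.
apply: rst_step; split=> //; exists (idrow_src a' :: (g, s) :: sigma').
have [szR szR'] := mor_stack_size ms.
apply/is_decomp_morE; [by rewrite /= szR | by rewrite /= szR' | split].
- by apply: (mor_row_idrow HV); rewrite /= cats0.
- apply: (mor_square_idrow_root HV).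
  have [_ [_ sR'] pR'] := (is_decomp_consE HV _ _ _ layers_T).1 dQ.
  by rewrite -pR' ctgt_paste_layers.
split=> //; last by rewrite /mor_square (rowcompL_cid HV).
have [rs ts _ _] := cs.
by split=> //; rewrite ts (csrc_compL HV aB').
Qed.

Lemma ess_unique_decomp_merge_top2 alpha :
  ess_unique_decomp alpha T' -> ess_unique_decomp alpha T.
Proof.
move=> [[D dD] uniq']; split; first by have [P [dP _]] := merge_top2_lift dD; exists P.
move=> P Q dP dQ; pose over P X := is_decomp alpha T P /\ merge_top2 P = X.
have lifts X Y : decomp_arrow alpha T' X Y -> (exists P, over P X) /\ (exists Q, over Q Y).
  by case=> dX' dY' _; split; apply: merge_top2_lift.
have lift_arrow X Y P' Q' : decomp_arrow alpha T' X Y -> over P' X -> over Q' Y ->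
    decomp_equiv alpha T P' Q'.
  by move=> XY [dP' eP] [dQ' eQ]; rewrite -eP -eQ in XY; apply: decomp_arrow_T'_lift.
have fibre X P' Q' : over P' X -> over Q' X -> decomp_equiv alpha T P' Q'.
  by move=> [dP' <-] [dQ' eQ]; apply: decomp_equiv_merge_top2.
have PQ := uniq' _ _ (is_decomp_merge_top2 dP) (is_decomp_merge_top2 dQ).
exact: (clos_rst_lift lifts lift_arrow fibre PQ).
Qed.

End UniqueTop2.

End MergeTopLayers.

Lemma ess_unique_decomp_of_height2 (V : vdc_data) (HV : is_vdc V) :
  (forall (alpha : Cell V) (T : tree),
     is_tree T -> height T = 2 -> leaves T = arity alpha -> ess_unique_decomp alpha T) ->
  forall n (alpha : Cell V) (T : tree),
    is_tree T -> height T = n.+2 -> leaves T = arity alpha -> ess_unique_decomp alpha T.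
Proof.
move=> unique2; elim=> [|n IH] alpha T tT hT lT; first exact: unique2.
case: T tT hT lT => [|l1 [|L2 RT]] // tT; rewrite /height /= => -[szRT] lT.
have [k El1] : exists k, l1 = [:: k] by case: tT; case: (l1) => [|k [|? ?]] // _ _ _; exists k.
subst l1; have RT_gt0 : 0 < size RT by rewrite szRT.
apply: (ess_unique_decomp_merge_top2 HV tT RT_gt0) => [r ar|].
  exact: unique2 (is_tree_top2 tT) erefl (esym ar).
apply: IH (is_tree_merge_top2 tT) _ _; first by rewrite /height /= szRT.
by rewrite (leaves_merge_top2 k).
Qed.

Theorem corollary4p11 (V : vdc_data) (HV : is_vdc V) :
  has_decomposable_multicells V <->
  (forall (alpha : Cell V) (T : tree),
     is_tree T -> height T = 2 -> leaves T = arity alpha ->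
     ess_unique_decomp alpha T).
Proof.
split=> [decomposable alpha T tT hT lT | unique2 alpha T tT hT lT].
  by apply: decomposable; rewrite ?hT.
have hT' : height T = (height T - 2).+2 by rewrite -addn2 subnK.
exact: ess_unique_decomp_of_height2 HV unique2 _ _ _ tT hT' lT.
Qed.
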